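(* Let $r\in\mathbb{R}$. For all integers $n,m,k\ge 0$ with $n\ge m+k$, \[ \binom{k+m}{m} S_2(n,m+k) = \sum_{n_1=m}^n \sum_{l=0}^m \sum_{j=0}^k \binom{n_1}{l}\binom{n-n_1}{j}\binom{n}{n_1} (-1)^{l+j} r^{l+j} S_{2,r}(n_1-l,m-l)\, S_{2,r}(n-n_1-j,k-j). \]
   Context: $S_2(n,k)$ denotes the Stirling numbers of the second kind, $\frac{1}{k!}(e^t-1)^k = \sum_{n\ge k} S_2(n,k)\frac{t^n}{n!}$. For $r\in\mathbb{R}$ and integer $k\ge 0$, the extended Stirling numbers of the second kind $S_{2,r}(n,k)$ are defined by $\frac{1}{k!}(e^t-1+rt)^k = \sum_{n=k}^\infty S_{2,r}(n,k)\frac{t^n}{n!}$, with $S_{2,r}(a,b)=0$ whenever $a<b$, and $\binom{a}{b}=0$ for $b>a$. *)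

From HB Require Import structures.
From mathcomp Require Import all_boot all_order all_algebra.
From mathcomp Require Import reals.
Set Implicit Arguments. Unset Strict Implicit. Unset Printing Implicit Defensive.
Import Order.TTheory GRing.Theory Num.Theory.
Local Open Scope ring_scope.

(* Truncation of e^t - 1 to degree N: sum_{i=1}^N t^i / i!.
   Coefficients of t^n for n <= N of any power of (expm1_trunc N + r t)
   coincide with those of the formal power series (e^t - 1 + r t)^k. *)
Definition expm1_trunc (R : fieldType) (N : nat) : {poly R} :=
  \sum_(1 <= i < N.+1) (i`!%:R)^-1 *: 'X^i.

(* Extended Stirling numbers of the second kind:
   (1/k!) (e^t - 1 + r t)^k = sum_n S_{2,r}(n,k) t^n / n!,
   i.e. S_{2,r}(n,k) = n!/k! [t^n] (e^t - 1 + r t)^k. *)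
Definition S2r (R : fieldType) (r : R) (n k : nat) : R :=
  n`!%:R / k`!%:R * ((expm1_trunc R n + r *: 'X) ^+ k)`_n.

(* Stirling numbers of the second kind:
   (1/k!) (e^t - 1)^k = sum_n S_2(n,k) t^n / n!. *)
Definition S2 (R : fieldType) (n k : nat) : R :=
  n`!%:R / k`!%:R * ((expm1_trunc R n) ^+ k)`_n.

(* Since (e^t - 1 + r t)^(m+k) is the product of the m-th and k-th powers,
   comparing coefficients of t^n gives the binomial convolution
   C(m+k,m) S_{2,r}(n,m+k) = sum_n1 C(n,n1) S_{2,r}(n1,m) S_{2,r}(n-n1,k),
   used here with r = 0, as S_2 = S_{2,0}.  Expanding
   e^t - 1 = (e^t - 1 + r t) - r t binomially then gives
   S_2(a,m) = sum_l C(a,l) (-r)^l S_{2,r}(a-l,m-l) for both factors. *)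

From HB Require Import structures.
From mathcomp Require Import all_boot all_order all_algebra.
From mathcomp Require Import reals.
From mathcomp Require Import zify ring.
Set Implicit Arguments. Unset Strict Implicit. Unset Printing Implicit Defensive.
Import Order.TTheory GRing.Theory Num.Theory.
Local Open Scope ring_scope.

Lemma coef_exprn_eq_le (R : nzRingType) (p q : {poly R}) a :
  (forall i, (i <= a)%N -> p`_i = q`_i) ->
  forall b i, (i <= a)%N -> (p ^+ b)`_i = (q ^+ b)`_i.
Proof.
move=> eq_pq; elim=> [|b IHb] i le_ia; first by rewrite !expr0.
rewrite !exprS !coefM; apply: eq_bigr => j _.
have lt_ji := ltn_ord j.
by rewrite eq_pq ?IHb //; lia.
Qed.

Lemma coef_exprn_lt (R : nzRingType) (p : {poly R}) m i :
  p`_0 = 0 -> (i < m)%N -> (p ^+ m)`_i = 0.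
Proof.
move=> p0; elim: m i => [|m IHm] i // lt_im.
rewrite exprS coefM big1 // => j _.
have lt_ji := ltn_ord j.
have [->|j_gt0] := posnP j; first by rewrite p0 mul0r.
by rewrite IHm ?mulr0 //; lia.
Qed.

Lemma coef_expm1_trunc (R : fieldType) N i :
  (expm1_trunc R N)`_i = if (0 < i <= N)%N then i`!%:R^-1 else 0.
Proof.
elim: N => [|N IHN].
  by rewrite /expm1_trunc big_geq // coef0; case: ifP => // /andP[]; lia.
rewrite /expm1_trunc big_nat_recr //= -/(expm1_trunc R N).
rewrite coefD IHN coefZ coefXn.
have [->|ne_iN] := eqVneq i N.+1; first by rewrite ltnn andbF leqnn mulr1 add0r.
rewrite mulr0 addr0.
by case: ifP => h1; case: ifP => h2 //; move: h1 h2 ne_iN; lia.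
Qed.

Lemma fact_natr_neq0 (R : numDomainType) n : (n`!%:R : R) != 0.
Proof. by rewrite pnatr_eq0 -lt0n fact_gt0. Qed.

Lemma bin_natr_fact (R : numFieldType) a l : (l <= a)%N ->
  ('C(a, l)%:R : R) = a`!%:R / (l`!%:R * (a - l)`!%:R).
Proof.
move=> le_la; rewrite -(bin_fact le_la) !natrM mulfK //.
by rewrite mulf_neq0 ?fact_natr_neq0.
Qed.

(* [S2r r a b] truncates e^t - 1 at order a; any higher order N gives the
   same coefficient. *)
Lemma coef_expm1_truncX_exprn (R : numFieldType) (r : R) N a b :
  (a <= N)%N ->
  ((expm1_trunc R N + r *: 'X) ^+ b)`_a = b`!%:R / a`!%:R * S2r r a b.
Proof.
move=> le_aN.
have eq_low i : (i <= a)%N ->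
    (expm1_trunc R N + r *: 'X)`_i = (expm1_trunc R a + r *: 'X)`_i.
  rewrite !coefD !coefZ !coef_expm1_trunc => le_ia; congr (_ + _).
  by case: ifP => h1; case: ifP => h2 //; move: h1 h2; lia.
rewrite /S2r (coef_exprn_eq_le eq_low) //; field.
by rewrite !fact_natr_neq0.
Qed.

Lemma S2r_small (R : fieldType) (r : R) a b : (a < b)%N -> S2r r a b = 0.
Proof.
move=> lt_ab; rewrite /S2r coef_exprn_lt ?mulr0 //.
by rewrite coefD coefZ coef_expm1_trunc coefX mulr0 addr0.
Qed.

Lemma S2r_convolution (R : numFieldType) (r : R) n m k :
  'C(m + k, m)%:R * S2r r n (m + k) =
  \sum_(0 <= i < n.+1) 'C(n, i)%:R * S2r r i m * S2r r (n - i) k.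
Proof.
rewrite big_mkord {1}/S2r exprD coefM !mulr_sumr.
apply: eq_bigr => -[i /= lt_in] _.
rewrite !coef_expm1_truncX_exprn ?leq_subr //.
rewrite !bin_natr_fact ?leq_addr // addKn; field.
by rewrite !fact_natr_neq0.
Qed.

Lemma S2r_shift (R : numFieldType) (r s : R) a m :
  S2r s a m =
  \sum_(l < m.+1) 'C(a, l)%:R * (s - r) ^+ l * S2r r (a - l) (m - l).
Proof.
rewrite {1}/S2r.
have -> : expm1_trunc R a + s *: 'X =
          (expm1_trunc R a + r *: 'X) + (s - r) *: 'X.
  by rewrite -addrA -scalerDl addrCA subrr addr0.
rewrite exprDn coef_sum mulr_sumr; apply: eq_bigr => -[l /=].
rewrite ltnS => le_lm _.
rewrite coefMn exprZn -scalerAr coefZ coefMXn.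
have [lt_al|le_la] := ltnP a l.
  by rewrite (bin_small lt_al) !(mulr0, mul0r, mul0rn, mulr0n).
rewrite coef_expm1_truncX_exprn ?leq_subr // -(mulr_natr _ 'C(m, l)).
rewrite !bin_natr_fact //; field.
by rewrite !fact_natr_neq0.
Qed.

Lemma S2_S2r0 (R : fieldType) n k : S2 R n k = S2r 0 n k.
Proof. by rewrite /S2 /S2r scale0r addr0. Qed.

Theorem mainTheorem7 (R : realType) (r : R) (n m k : nat) :
  (m + k <= n)%N ->
  ('C(k + m, m))%:R * S2 R n (m + k) =
  \sum_(m <= n1 < n.+1) \sum_(l < m.+1) \sum_(j < k.+1)
    ('C(n1, l))%:R * ('C(n - n1, j))%:R * ('C(n, n1))%:R
    * (-1) ^+ (l + j) * r ^+ (l + j)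
    * S2r r (n1 - l) (m - l) * S2r r (n - n1 - j) (k - j).
Proof.
move=> le_mkn.
rewrite S2_S2r0 [(k + m)%N]addnC S2r_convolution.
have le_mn : (m <= n.+1)%N by lia.
rewrite (big_cat_nat (leq0n m) le_mn) /=.
rewrite big_nat big1 ?add0r => [|i /andP[_ lt_im]]; last first.
  by rewrite S2r_small // mulr0 mul0r.
apply: eq_bigr => n1 _.
rewrite !(S2r_shift r) sub0r [X in X * _]mulr_sumr mulr_suml.
apply: eq_bigr => l _.
rewrite mulr_sumr; apply: eq_bigr => j _.
rewrite !exprD (exprNn r l) (exprNn r j); ring.
Qed.
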